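(* Let $n\geq 2$, $R_m,k>0$ and $0\leq\alpha\leq 1$. Let $\Omega\subset\mathbb{R}^n$ be a bounded Lipschitz domain of diameter at most $R_m$ whose complement $\mathbb{R}^n\setminus\Omega$ is connected. Then there exists a positive constant $C$, depending only on $k$, $R_m$ and $n$, such that for every $\varphi\in C^\alpha(\overline{\Omega})$ satisfying \[ \frac{\sup_{\partial\Omega}|\varphi|}{\|\varphi\|_{C^\alpha(\overline\Omega)}}\geq C\,\big(\operatorname{diam}(\Omega)\big)^\alpha, \] the source $\chi_\Omega\varphi$ radiates a non-zero far-field pattern at wavenumber $k$.
   Context: Source scattering: for a bounded domain $\Omega\subset\mathbb{R}^n$, a function $\varphi$ on $\overline\Omega$ and a wavenumber $k>0$, let $f=\chi_\Omega\varphi$ and let $u\in H^2_{loc}(\mathbb{R}^n)$ be the unique solution of $(\Delta+k^2)u=f$ in $\mathbb{R}^n$ satisfying the Sommerfeld radiation condition $\lim_{r\to\infty}r^{(n-1)/2}(\partial_r-ik)u=0$, $r=|x|$. Its far-field pattern is $u_\infty(\hat x)=C_{n,k}\int_{\mathbb{R}^n}e^{-ik\hat x\cdot y}f(y)\,dy$, $\hat x\in\mathbb{S}^{n-1}$, where $C_{n,k}=\frac{-i}{\sqrt{8\pi}}\big(\frac{k}{2\pi}\big)^{(n-2)/2}e^{-(n-1)\pi i/4}$; equivalently $u(x)=\frac{e^{ik|x|}}{|x|^{(n-1)/2}}u_\infty(x/|x|)+$ lower order terms as $|x|\to\infty$. The source ''radiates a non-zero far-field pattern'' if $u_\infty\not\equiv0$,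 and is ''radiationless'' if $u_\infty\equiv 0$. $\|\cdot\|_{C^\alpha}$ is the standard Hölder norm. Standing assumption: all bounded domains $\Omega$ considered satisfy $H^2_0(\Omega)=\{u|_\Omega: u\in H^2(\mathbb{R}^n),\ u=0 \text{ in } \mathbb{R}^n\setminus\overline\Omega\}$. *)

From HB Require Import structures.
From mathcomp Require Import all_boot all_order all_algebra.
From mathcomp Require Import all_classical all_reals all_analysis.
From mathcomp Require Import complex.
Set Implicit Arguments. Unset Strict Implicit. Unset Printing Implicit Defensive.
Import Order.TTheory GRing.Theory Num.Theory.
Import numFieldNormedType.Exports.
Local Open Scope classical_set_scope.
Local Open Scope ring_scope.
Local Open Scope complex_scope.

Section Defs.
Variable R : realType.

Definition dotv (n : nat) (x y : 'rV[R]_n) : R := \sum_(i < n) x 0 i * y 0 i.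
Definition enorm (n : nat) (x : 'rV[R]_n) : R := Num.sqrt (dotv x x).
Definition edist (n : nat) (x y : 'rV[R]_n) : R := enorm (x - y).

Definition diam (n : nat) (A : set 'rV[R]_n) : R :=
  sup [set d | exists x y, A x /\ A y /\ d = edist x y].

Definition boundary (n : nat) (A : set 'rV[R]_n) : set 'rV[R]_n :=
  closure A `\` interior A.

Definition lipschitz_fun (n : nat) (g : 'rV[R]_n -> R) : Prop :=
  exists L : R, forall a b, `|g a - g b| <= L * edist a b.

(* Bounded Lipschitz domain: nonempty bounded connected open set which, near
   every boundary point p, after a rigid change of coordinates (unit normal
   direction nu, hyperplane nu^perp), is the strict epigraph of a Lipschitz
   function inside a cylinder. *)
Definition lipschitz_domain (n : nat) (O : set 'rV[R]_n) : Prop :=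
  [/\ open O, connected O, O !=set0,
      (exists M : R, forall x, O x -> enorm x <= M) &
      forall p, boundary O p ->
        exists (nu : 'rV[R]_n) (g : 'rV[R]_n -> R) (r h : R),
          [/\ enorm nu = 1, lipschitz_fun g, 0 < r, 0 < h &
              forall x : 'rV[R]_n,
                let z := x - p in
                let t := dotv z nu in
                let z' := z - t *: nu in
                enorm z' < r -> `|t| < h -> (O x <-> g z' < t)]].

Definition cnorm (z : R[i]) : R := Num.sqrt (complex.Re z ^+ 2 + complex.Im z ^+ 2).

Definition holder_sup (n : nat) (O : set 'rV[R]_n) (phi : 'rV[R]_n -> R[i]) :=
  [set cnorm (phi x) | x in closure O].

Definition holder_quot (n : nat) (alpha : R) (O : set 'rV[R]_n)
    (phi : 'rV[R]_n -> R[i]) :=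
  [set q | exists x y, [/\ closure O x, closure O y, x <> y &
      q = cnorm (phi x - phi y) / powR (edist x y) alpha]].

Definition continuous_on_closure (n : nat) (O : set 'rV[R]_n)
    (phi : 'rV[R]_n -> R[i]) : Prop :=
  forall x, closure O x -> forall e : R, 0 < e -> exists2 d : R, 0 < d &
    forall y, closure O y -> edist x y < d -> cnorm (phi y - phi x) < e.

Definition in_holder (n : nat) (alpha : R) (O : set 'rV[R]_n)
    (phi : 'rV[R]_n -> R[i]) : Prop :=
  [/\ continuous_on_closure O phi,
      has_ubound (holder_sup O phi) & has_ubound (holder_quot alpha O phi)].

Definition holder_norm (n : nat) (alpha : R) (O : set 'rV[R]_n)
    (phi : 'rV[R]_n -> R[i]) : R :=
  sup (holder_sup O phi) + sup (holder_quot alpha O phi).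

Definition sup_boundary (n : nat) (O : set 'rV[R]_n) (phi : 'rV[R]_n -> R[i]) : R :=
  sup [set cnorm (phi x) | x in boundary O].

(* Lebesgue integral over R^n, as iterated one-dimensional Lebesgue integrals *)
Fixpoint iint (n : nat) : ('rV[R]_n -> R) -> R :=
  match n return ('rV[R]_n -> R) -> R with
  | 0 => fun g => g 0
  | m.+1 => fun g => Rintegral lebesgue_measure setT
              (fun t : R => iint (fun x : 'rV[R]_m => g (row_mx (t%:M) x)))
  end.

Definition cint (n : nat) (f : 'rV[R]_n -> R[i]) : R[i] :=
  Complex (iint (fun y => complex.Re (f y))) (iint (fun y => complex.Im (f y))).

Definition expi (t : R) : R[i] := Complex (cos t) (sin t).

Definition Cnk (n : nat) (k : R) : R[i] :=
  (Complex 0 (-1)) * ((Num.sqrt (8 * pi))^-1)%:C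
  * (powR (k / (2 * pi)) ((n%:R - 2) / 2))%:C
  * expi (- ((n%:R - 1) * pi / 4)).

Definition farfield (n : nat) (k : R) (O : set 'rV[R]_n)
    (phi : 'rV[R]_n -> R[i]) (xh : 'rV[R]_n) : R[i] :=
  Cnk n k * cint (fun y => expi (- (k * dotv xh y)) * ((\1_O y : R)%:C * phi y)).

Definition radiates_nonzero (n : nat) (k : R) (O : set 'rV[R]_n)
    (phi : 'rV[R]_n -> R[i]) : Prop :=
  exists xh : 'rV[R]_n, enorm xh = 1 /\ farfield k O phi xh <> 0.

End Defs.

(* Pick a point y0 of Omega near a boundary point where |phi| almost attains
   its boundary supremum s, so that |phi(y0)| >= s/2.  Along the direction e_1
   the integrand exp(-i k y_1) phi(y) of the far field differs from its value
   z0 at y0 by at most (2k + 1) ||phi||_{C^alpha} diam^alpha <= s/3 on Omega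
   (the hypothesis forces diam < 1, hence diam <= diam^alpha).  As |z0| >= s/2,
   the real or the imaginary part of the integrand keeps a fixed sign and stays
   away from 0 on the open set Omega, so the corresponding part of the integral
   does not vanish. *)

From Pilot Require Import Defs.
From HB Require Import structures.
From mathcomp Require Import all_boot all_order all_algebra.
From mathcomp Require Import all_classical all_reals all_analysis.
From mathcomp Require Import complex measurable_realfun.
From mathcomp Require Import ring lra.
Import Order.TTheory GRing.Theory Num.Theory.
Import numFieldNormedType.Exports.
Set Implicit Arguments.
Unset Strict Implicit.
Unset Printing Implicit Defensive.

(* [edist] alone would be the extended distance of mathcomp-analysis. *)
Local Notation edist := Defs.edist.

Local Open Scope classical_set_scope.
Local Open Scope ring_scope.

Section measure_integral.
Context d (T : measurableType d) (R : realType) (mu : {measure set T -> \bar R}).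

Lemma RintegralN (D : set T) (f : T -> R) :
  Rintegral mu D (fun x => - f x) = - Rintegral mu D f.
Proof.
rewrite /Rintegral (integralE _ _ (fun x => (- f x)%:E)) [in RHS]integralE.
have -> : (fun x => (- f x)%:E)^\+%E = (fun x => (f x)%:E)^\-%E by rewrite -funeposN.
have -> : (fun x => (- f x)%:E)^\-%E = (fun x => (f x)%:E)^\+%E by rewrite -funenegN.
have := @integral_ge0 _ _ _ mu D _ (fun x _ => funepos_ge0 (fun x => (f x)%:E) x).
have := @integral_ge0 _ _ _ mu D _ (fun x _ => funeneg_ge0 (fun x => (f x)%:E) x).
by case: (\int[_]_(x in _) _)%E => [a| |]; case: (\int[_]_(x in _) _)%E => [b| |] //=;
  rewrite ?opprB ?oppr0.
Qed.

Lemma Rintegral0 (D : set T) : Rintegral mu D (fun _ => 0) = 0.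
Proof. by rewrite /Rintegral integral0. Qed.

Local Open Scope ereal_scope.

(* Unlike [ge0_le_integral], no measurability is required: the integral of a
   nonnegative function is a supremum over the simple functions below it. *)
Lemma ge0_le_integralT (f g : T -> \bar R) :
  (forall x, 0 <= f x) -> (forall x, f x <= g x) ->
  \int[mu]_x f x <= \int[mu]_x g x.
Proof.
move=> f0 fg; have g0 x : 0 <= g x := le_trans (f0 x) (fg x).
rewrite !ge0_integralTE //; apply: ereal_sup_le => _ [h hf <-].
by exists h => //= x; exact: le_trans (hf x) (fg x).
Qed.

Lemma integral_cst_indic (M : R) (A : set T) : measurable A -> (0 <= M)%R ->
  \int[mu]_x (M * \1_A x)%:E = M%:E * mu A.
Proof.
move=> mA M0; under eq_integral do rewrite EFinM.
rewrite ge0_integralZl_EFin //; last exact/measurable_EFinP/measurable_indic.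
by rewrite integral_indic // setIT.
Qed.

End measure_integral.

Section lebesgue_bounds.
Variable R : realType.
Local Notation mu := (@lebesgue_measure R).
Implicit Types (f : R -> R) (M B a b c : R).

Lemma integral_le_supported f M B :
  (forall t, 0 <= f t <= M) -> (forall t, f t != 0 -> `|t| <= B) -> 0 <= B ->
  (\int[mu]_x (f x)%:E <= (M * (2 * B))%:E)%E.
Proof.
move=> fM fB B0; have M0 : 0 <= M by have /andP[/le_trans] := fM 0; apply.
apply: (@le_trans _ _ (\int[mu]_x (M * \1_[set` `[-B, B]] x)%:E)%E).
  apply: ge0_le_integralT => x; first by rewrite lee_fin; case/andP: (fM x).
  rewrite lee_fin /indic; have [->|/fB xB] := eqVneq (f x) 0; first by rewrite mulr_ge0.
  by rewrite mem_set /= ?in_itv /= -?ler_norml // mulr1; case/andP: (fM x).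
rewrite integral_cst_indic //= lebesgue_measure_itv /= lte_fin.
by case: ifP => _; rewrite -?EFinD -EFinM lee_fin ?mulr0 ?mulr_ge0 //
  opprK -mulr2n mulr_natl.
Qed.

Lemma integral_ge_on_itv f a b c : (forall t, 0 <= f t) -> a <= b -> 0 <= c ->
  (forall t, a < t < b -> c <= f t) ->
  ((c * (b - a))%:E <= \int[mu]_x (f x)%:E)%E.
Proof.
move=> f0 ab c0 fc.
apply: (@le_trans _ _ (\int[mu]_x (c * \1_[set` `]a, b[] x)%:E)%E).
  rewrite integral_cst_indic //= lebesgue_measure_itv /= lte_fin.
  by case: ltgtP ab => // -> _; rewrite subrr mulr0 mule0.
apply: ge0_le_integralT => x; rewrite lee_fin /indic.
  by case: (_ \in _); rewrite ?mulr1 ?mulr0.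
case: (boolP (x \in _)) => [|_]; last by rewrite mulr0.
by rewrite inE /= in_itv /= mulr1 => /fc.
Qed.

Lemma Rintegral_le_supported f M B :
  (forall t, 0 <= f t <= M) -> (forall t, f t != 0 -> `|t| <= B) -> 0 <= B ->
  Rintegral mu setT f <= M * (2 * B).
Proof.
move=> fM fB B0; have := integral_le_supported fM fB B0.
have : (0 <= \int[mu]_x (f x)%:E)%E.
  by apply: integral_ge0 => x _; rewrite lee_fin; case/andP: (fM x).
by rewrite /Rintegral; case: (\int[_]_(_ in _) _)%E.
Qed.

Lemma Rintegral_ge_on_itv f M B a b c :
  (forall t, 0 <= f t <= M) -> (forall t, f t != 0 -> `|t| <= B) -> 0 <= B ->
  a <= b -> 0 <= c -> (forall t, a < t < b -> c <= f t) ->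
  c * (b - a) <= Rintegral mu setT f.
Proof.
move=> fM fB B0 ab c0 fc; have f0 t : 0 <= f t by case/andP: (fM t).
have := integral_ge_on_itv f0 ab c0 fc; have := integral_le_supported fM fB B0.
by rewrite /Rintegral; case: (\int[_]_(_ in _) _)%E.
Qed.

End lebesgue_bounds.

Section iterated_integral.
Variable R : realType.

Lemma iint0 n : iint (fun _ : 'rV[R]_n => 0) = 0.
Proof. by elim: n => [//|n IHn] /=; rewrite IHn Rintegral0. Qed.

Lemma iintN n (g : 'rV[R]_n -> R) : iint (fun y => - g y) = - iint g.
Proof.
elim: n g => [//|n IHn] g /=; rewrite -RintegralN.
by congr Rintegral; apply/funext => t; rewrite IHn.
Qed.

Lemma row_mx_scalar_lshift n (t : R) (y : 'rV[R]_n) :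
  row_mx (t%:M : 'rV_1) y 0 (lshift n 0) = t.
Proof. by rewrite (row_mxEl (t%:M : 'rV_1)) mxE eqxx mulr1n. Qed.

Definition supported_in_cube n (g : 'rV[R]_n -> R) (B : R) :=
  forall y, g y != 0 -> forall i, `|y 0 i| <= B.

Lemma supported_in_cube_slice n (g : 'rV[R]_n.+1 -> R) B t :
  supported_in_cube g B -> supported_in_cube (fun y => g (row_mx t%:M y)) B.
Proof.
by move=> gB y gy i; have := gB _ gy (rshift 1 i); rewrite (row_mxEr (t%:M : 'rV_1)).
Qed.

Lemma iint_slice_supported n (g : 'rV[R]_n.+1 -> R) B t :
  supported_in_cube g B -> iint (fun y => g (row_mx t%:M y)) != 0 -> `|t| <= B.
Proof.
move=> gB; apply: contraNT; rewrite -ltNge => Bt; apply/eqP.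
rewrite -[RHS](iint0 n); congr iint; apply/funext => y; apply/eqP.
apply: contraTT Bt => /gB /(_ (lshift n (0 : 'I_1))).
by rewrite row_mx_scalar_lshift -leNgt.
Qed.

Lemma iint_ge0_le n (g : 'rV[R]_n -> R) (M B : R) :
  (forall y, 0 <= g y <= M) -> supported_in_cube g B -> 0 <= B ->
  0 <= iint g <= M * (2 * B) ^+ n.
Proof.
elim: n g => [|n IHn] g gM gB B0; first by rewrite expr0 mulr1 gM.
have slice t := IHn _ (fun y => gM (row_mx t%:M y)) (supported_in_cube_slice gB) B0.
rewrite exprSr (mulrA M) Rintegral_ge0 => [|t _]; last by case/andP: (slice t).
by apply: Rintegral_le_supported => // t; exact: iint_slice_supported.
Qed.

Lemma iint_ge_on_cube n (g : 'rV[R]_n -> R) (M B c delta : R) (q : 'rV[R]_n) :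
  (forall y, 0 <= g y <= M) -> supported_in_cube g B -> 0 <= B ->
  0 < delta -> 0 <= c ->
  (forall y : 'rV_n, (forall i, `|y 0 i - q 0 i| < delta) -> c <= g y) ->
  c * delta ^+ n <= iint g.
Proof.
elim: n g q => [|n IHn] g q gM gB B0 d0 c0 gc; first by rewrite expr0 mulr1 gc // => -[].
set q0 := q 0 (lshift n (0 : 'I_1)); set q' := \row_j q 0 (rshift 1 j).
have slice_bounds t :=
  iint_ge0_le (fun y => gM (row_mx t%:M y)) (supported_in_cube_slice gB) B0.
have slice_ge t : q0 - delta < t < q0 + delta ->
    c * delta ^+ n <= iint (fun y => g (row_mx t%:M y)).
  move=> /andP[t1 t2].
  apply: (IHn _ q') (fun y => gM _) (supported_in_cube_slice gB) B0 d0 c0 _.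
  move=> y yq; apply: gc => i.
  have -> : i = unsplit (fintype.split (i : 'I_(1 + n))) by rewrite splitK.
  case: (fintype.split _) => j /=.
    by rewrite (ord1 j) row_mx_scalar_lshift ltr_norml; rewrite /q0 in t1 t2; lra.
  by rewrite (row_mxEr (t%:M : 'rV_1)); have := yq j; rewrite mxE.
have ab : q0 - delta <= q0 + delta by lra.
have cd0 : 0 <= c * delta ^+ n by rewrite mulr_ge0 // exprn_ge0 // ltW.
have slice_supp t := iint_slice_supported (t := t) gB.
apply: le_trans (Rintegral_ge_on_itv slice_bounds slice_supp B0 ab cd0 slice_ge).
have : 0 <= c * (delta * delta ^+ n).
  by rewrite mulr_ge0 // mulr_ge0 // ?exprn_ge0 // ltW.
by rewrite exprS; lra.
Qed.

End iterated_integral.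

Section euclidean.
Variables (R : realType) (n : nat).
Implicit Types (x y : 'rV[R]_n) (A : set 'rV[R]_n).

Lemma dotv_ge0 x : 0 <= dotv x x.
Proof. by apply: sumr_ge0 => i _; rewrite -expr2 sqr_ge0. Qed.

Lemma enorm_ge0 x : 0 <= enorm x.
Proof. exact: sqrtr_ge0. Qed.

Lemma coord_le_enorm x i : `|x 0 i| <= enorm x.
Proof.
rewrite -sqrtr_sqr /enorm ler_sqrt ?dotv_ge0 // /dotv (bigD1 i) //= expr2 lerDl.
by apply: sumr_ge0 => j _; rewrite -expr2 sqr_ge0.
Qed.

Lemma coord_le_edist x y i : `|x 0 i - y 0 i| <= edist x y.
Proof. by have := coord_le_enorm (x - y) i; rewrite !mxE. Qed.

Lemma enorm_le_cube x e : 0 <= e -> (forall i, `|x 0 i| <= e) -> enorm x <= n%:R * e.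
Proof.
move=> e0 xe; rewrite /enorm -(ger0_norm (mulr_ge0 (ler0n _ n) e0)) -sqrtr_sqr.
rewrite ler_sqrt ?sqr_ge0 //; apply: (@le_trans _ _ (\sum_(i < n) e ^+ 2)).
  by apply: ler_sum => i _; rewrite -expr2 -real_normK ?num_real // lerXn2r ?nnegrE.
rewrite sumr_const card_ord -[_ *+ n]mulr_natl exprMn ler_wpM2r ?sqr_ge0 //.
rewrite -natrX ler_nat.
by case: n => // m; rewrite expnS mulSn leq_addr.
Qed.

Lemma edist_gt0 x y : x <> y -> 0 < edist x y.
Proof.
move=> xy; rewrite lt_def enorm_ge0 andbT sqrtr_eq0 -ltNge.
have [i xyi] : exists i, x 0 i != y 0 i.
  apply/existsP; apply: contra_notT xy => /existsPn xy.
  by apply/matrixP => i j; rewrite (ord1 i); apply/eqP; have := xy j; rewrite negbK.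
rewrite /dotv (bigD1 i) //= ltr_pwDl ?sumr_ge0 // => [|j _].
  by rewrite -expr2 exprn_even_gt0 // !mxE subr_eq0.
by rewrite -expr2 sqr_ge0.
Qed.

Lemma edist_le_enorm x y M : enorm x <= M -> enorm y <= M -> edist x y <= 2 * M.
Proof.
move=> hx hy; have M0 : 0 <= M := le_trans (enorm_ge0 x) hx.
rewrite /edist /enorm -(ger0_norm (_ : 0 <= 2 * M)) ?mulr_ge0 //.
rewrite -sqrtr_sqr ler_sqrt ?sqr_ge0 //.
apply: (@le_trans _ _ (2 * dotv x x + 2 * dotv y y)).
  rewrite /dotv !mulr_sumr -big_split /=; apply: ler_sum => i _; rewrite !mxE.
  by rewrite -!expr2 -subr_ge0 (_ : _ - _ = (x 0 i + y 0 i) ^+ 2); [exact: sqr_ge0|ring].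
have sq (z : 'rV[R]_n) : dotv z z = enorm z ^+ 2 by rewrite sqr_sqrtr ?dotv_ge0.
rewrite !sq (_ : (2 * M) ^+ 2 = 2 * M ^+ 2 + 2 * M ^+ 2); last by ring.
by rewrite lerD // ler_pM2l // lerXn2r // nnegrE ?enorm_ge0.
Qed.

Definition ebounded A := exists M, forall x, A x -> enorm x <= M.

Lemma edist_le_diam A x y : ebounded A -> A x -> A y -> edist x y <= diam A.
Proof.
move=> [M AM] Ax Ay; apply: ub_le_sup; last by exists x, y.
by exists (2 * M) => _ [a [b [Aa [Ab ->]]]]; exact: edist_le_enorm (AM _ Aa) (AM _ Ab).
Qed.

Lemma open_cube A y0 : open A -> A y0 ->
  exists2 d, 0 < d & forall y, (forall i, `|y 0 i - y0 0 i| < d) -> A y.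
Proof.
move=> oA Ay0; have /nbhs_ballP[d d0 dA] : nbhs y0 A by apply: open_nbhs_nbhs.
exists d => // y yd; apply: dA; split=> // i j; rewrite (ord1 i) /ball /= distrC.
exact: yd.
Qed.

Lemma closure_edist A p e : closure A p -> 0 < e -> exists2 y, A y & edist p y < e.
Proof.
move=> Ap e0; have n1 : 0 < n%:R + 1 :> R by rewrite ltr_wpDl.
set e' := e / (n%:R + 1); have e'0 : 0 < e' by rewrite divr_gt0.
have [y [Ay [_ pye']]] := Ap _ (nbhsx_ballx p e' e'0).
exists y => //; have : edist p y <= n%:R * e'.
  by apply: enorm_le_cube (ltW e'0) _ => i; rewrite !mxE ltW //; exact: pye' 0 i.
move/le_lt_trans; apply.
by rewrite /e' mulrA ltr_pdivrMr // mulrC ltr_pM2l // ltrDl.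
Qed.

Lemma dotv_delta_mx (i : 'I_n) y : dotv (delta_mx 0 i) y = y 0 i.
Proof.
rewrite /dotv (bigD1 i) //= big1 ?addr0 => [|j /negbTE ji].
  by rewrite mxE !eqxx mul1r.
by rewrite mxE ji andbF mul0r.
Qed.

Lemma enorm_delta_mx (i : 'I_n) : enorm (delta_mx 0 i : 'rV[R]_n) = 1.
Proof. by rewrite /enorm dotv_delta_mx mxE !eqxx sqrtr1. Qed.

Lemma diam_gt0 A y0 : (0 < n)%N -> open A -> A y0 -> ebounded A -> 0 < diam A.
Proof.
move=> n0 oA Ay0 Abd; have [d d0 dA] := open_cube oA Ay0.
pose i0 := Ordinal n0; pose y1 := y0 + (d / 2) *: delta_mx 0 i0.
have y1y0 i : y1 0 i - y0 0 i = (d / 2) * (i == i0)%:R.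
  by rewrite !mxE eqxx addrC addKr.
have Ay1 : A y1.
  apply: dA => i; rewrite y1y0 normrM ger0_norm ?divr_ge0 ?ltW //.
  by case: (i == i0); rewrite ?normr1 ?normr0 ?mulr1 ?mulr0; lra.
apply: lt_le_trans (edist_le_diam Abd Ay1 Ay0).
apply: edist_gt0 => /(congr1 (fun z : 'rV[R]_n => z 0 i0)) /eqP.
by rewrite -subr_eq0 y1y0 eqxx mulr1; lra.
Qed.

End euclidean.

Section complex_modulus.
Local Open Scope complex_scope.
Variable R : realType.
Implicit Types (z w : R[i]) (a b t : R).

Lemma cnormE z : (cnorm z)%:C = `|z|.
Proof. by rewrite normc_def. Qed.

Lemma cnorm_ge0 z : 0 <= cnorm z.
Proof. exact: sqrtr_ge0. Qed.

Lemma cnormM z w : cnorm (z * w) = cnorm z * cnorm w.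
Proof. by apply: complexI; rewrite rmorphM /= !cnormE normrM. Qed.

Lemma cnormD z w : cnorm (z + w) <= cnorm z + cnorm w.
Proof. by rewrite -lecR rmorphD /= !cnormE ler_normD. Qed.

Lemma cnorm_distC z w : cnorm (z - w) = cnorm (w - z).
Proof. by apply: complexI; rewrite !cnormE distrC. Qed.

Lemma cnorm_sqr z : cnorm z ^+ 2 = complex.Re z ^+ 2 + complex.Im z ^+ 2.
Proof. by rewrite sqr_sqrtr // addr_ge0 ?sqr_ge0. Qed.

Lemma Re_le_cnorm z : `|complex.Re z| <= cnorm z.
Proof. by rewrite -sqrtr_sqr ler_sqrt ?addr_ge0 ?sqr_ge0 // lerDl sqr_ge0. Qed.

Lemma Im_le_cnorm z : `|complex.Im z| <= cnorm z.
Proof. by rewrite -sqrtr_sqr ler_sqrt ?addr_ge0 ?sqr_ge0 // lerDr sqr_ge0. Qed.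

Lemma cnorm_le_ReIm z : cnorm z <= `|complex.Re z| + `|complex.Im z|.
Proof.
have ReIm0 := mulr_ge0 (normr_ge0 (complex.Re z)) (normr_ge0 (complex.Im z)).
rewrite -(ger0_norm (addr_ge0 (normr_ge0 _) (normr_ge0 _))) -sqrtr_sqr.
by rewrite ler_sqrt ?sqr_ge0 // sqrrD !real_normK ?num_real //; lra.
Qed.

Lemma cnorm_expi t : cnorm (expi t) = 1.
Proof. by rewrite /cnorm /= cos2Dsin2 sqrtr1. Qed.

Lemma expi_neq0 t : expi t != 0.
Proof.
apply/eqP => e0; have := cnorm_expi t.
by rewrite e0 /cnorm /= expr0n addr0 sqrtr0 => /eqP; rewrite eq_sym oner_eq0.
Qed.

Lemma dist_cos_le a b : `|cos a - cos b| <= `|a - b|.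
Proof.
wlog ab : a b / a <= b.
  by move=> H; case: (leP a b) => [|/ltW] /H //; rewrite distrC (distrC a).
rewrite distrC (distrC a).
have [c _ ->] := MVT_segment ab (fun x _ => is_derive_cos x)
  (continuous_subspaceT (fun x => @continuous_cos R x)).
by rewrite normrM normrN ler_piMl ?sin_max.
Qed.

Lemma dist_sin_le a b : `|sin a - sin b| <= `|a - b|.
Proof.
wlog ab : a b / a <= b.
  by move=> H; case: (leP a b) => [|/ltW] /H //; rewrite distrC (distrC a).
rewrite distrC (distrC a).
have [c _ ->] := MVT_segment ab (fun x _ => is_derive_sin x)
  (continuous_subspaceT (fun x => @continuous_sin R x)).
by rewrite normrM ler_piMl ?cos_max.
Qed.

Lemma cnorm_expiB a b : cnorm (expi a - expi b) <= 2 * `|a - b|.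
Proof.
apply: le_trans (cnorm_le_ReIm _) _; rewrite mulr2n mulrDl mul1r.
by apply: lerD; [exact: dist_cos_le|exact: dist_sin_le].
Qed.

Lemma cnorm_expiM_sub a b z w :
  cnorm (expi a * z - expi b * w) <= 2 * `|a - b| * cnorm z + cnorm (z - w).
Proof.
have -> : expi a * z - expi b * w = (expi a - expi b) * z + expi b * (z - w) by ring.
apply: le_trans (cnormD _ _) _; rewrite !cnormM cnorm_expi mul1r lerD2r.
by rewrite ler_wpM2r ?cnorm_ge0 ?cnorm_expiB.
Qed.

Lemma Re_or_Im_gt z e :
  2 * e ^+ 2 < cnorm z ^+ 2 -> e < `|complex.Re z| \/ e < `|complex.Im z|.
Proof.
rewrite cnorm_sqr => ze; have [Re_le|] := leP `|complex.Re z| e; last by left.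
have [Im_le|] := leP `|complex.Im z| e; last by right.
have sqr_le x : `|x| <= e -> x ^+ 2 <= e ^+ 2.
  by move=> xe; rewrite -real_normK ?num_real // lerXn2r ?nnegrE // (le_trans _ xe).
by move: ze; have := sqr_le _ Re_le; have := sqr_le _ Im_le; lra.
Qed.

Lemma Cnk_neq0 n (k : R) : 0 < k -> Cnk n k != 0.
Proof.
move=> k0; rewrite /Cnk !mulf_neq0 ?expi_neq0 //.
- by rewrite eq_complex /= negb_and oppr_eq0 oner_eq0 orbT.
- by rewrite eq_complex /= eqxx andbT invr_eq0 sqrtr_eq0 -ltNge mulr_gt0 // pi_gt0.
- rewrite eq_complex /= eqxx andbT gt_eqF // powR_gt0 //.
  by rewrite divr_gt0 // mulr_gt0 // pi_gt0.
Qed.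

End complex_modulus.

Section nonvanishing_integral.
Variables (R : realType) (n : nat) (A : set 'rV[R]_n) (y0 : 'rV[R]_n).
Hypotheses (oA : open A) (Abd : ebounded A) (Ay0 : A y0).

Lemma iint_neq0_near_cst (g : 'rV[R]_n -> R) (a e : R) :
  (forall y, ~ A y -> g y = 0) -> (forall y, A y -> `|g y - a| <= e) -> e < `|a| ->
  iint g != 0.
Proof.
wlog a0 : g a / 0 <= a.
  move=> wlog_a g0 ga ea; have [|a_lt0] := leP 0 a; first by move/wlog_a; apply.
  rewrite -oppr_eq0 -iintN; apply: (wlog_a _ (- a)); rewrite ?oppr_ge0 ?ltW ?normrN //.
    by move=> y /g0 ->; rewrite oppr0.
  by move=> y /ga; rewrite -opprD normrN.
move=> g0 ga; rewrite ger0_norm // => ea.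
have [M AM] := Abd; have [d d0 dA] := open_cube oA Ay0.
have e0 : 0 <= e := le_trans (normr_ge0 _) (ga _ Ay0).
have gA y : A y -> a - e <= g y <= a + e by move/ga; rewrite ler_distl.
have gM y : 0 <= g y <= a + e.
  have [/gA/andP[ge ->]|/g0 ->] := pselect (A y); last by rewrite lexx addr_ge0.
  by rewrite andbT (le_trans _ ge) // subr_ge0 ltW.
have g_supp : supported_in_cube g M.
  move=> y gy i; have [Ay|/g0 gy0] := pselect (A y); last by rewrite gy0 eqxx in gy.
  exact: le_trans (coord_le_enorm _ _) (AM _ Ay).
have M0 : 0 <= M := le_trans (enorm_ge0 _) (AM _ Ay0).
have ae : 0 < a - e by rewrite subr_gt0.
have g_cube (y : 'rV[R]_n) : (forall i, `|y 0 i - y0 0 i| < d) -> a - e <= g y.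
  by move=> /dA /gA /andP[].
have := iint_ge_on_cube gM g_supp M0 d0 (ltW ae) g_cube.
by apply: contraTneq => ->; rewrite -ltNge pmulr_rgt0 // exprn_gt0.
Qed.

Lemma cint_neq0_near_cst (f : 'rV[R]_n -> R[i]) (z : R[i]) (e : R) :
  (forall y, ~ A y -> f y = 0) -> (forall y, A y -> cnorm (f y - z) <= e) ->
  2 * e ^+ 2 < cnorm z ^+ 2 -> cint f != 0.
Proof.
move=> f0 fz /Re_or_Im_gt ze; rewrite /cint eq_complex negb_and /=.
case: ze => [Re_gt|Im_gt]; apply/orP; [left|right].
- apply: (iint_neq0_near_cst _ _ Re_gt) => y; first by move/f0 ->.
  by move/fz; apply: le_trans; rewrite -raddfB; exact: Re_le_cnorm.
- apply: (iint_neq0_near_cst _ _ Im_gt) => y; first by move/f0 ->.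
  by move/fz; apply: le_trans; rewrite -raddfB; exact: Im_le_cnorm.
Qed.

End nonvanishing_integral.

Lemma sup_ge0 (R : realType) (E : set R) :
  has_ubound E -> (forall x, E x -> 0 <= x) -> 0 <= sup E.
Proof.
move=> ubE E0; have [->|/set0P[x Ex]] := eqVneq E set0; first by rewrite sup0.
exact: le_trans (E0 _ Ex) (ub_le_sup ubE Ex).
Qed.

Lemma le_powR_le1 (R : realType) (a r : R) : 0 <= a <= 1 -> r <= 1 -> a <= a `^ r.
Proof.
move=> /andP[a0 a1] r1; have [->|a_neq0] := eqVneq a 0; first exact: powR_ge0.
by apply: ger1_powR => //; rewrite lt_def a_neq0 a0.
Qed.

Lemma holder_ratio_bounds (R : realType) (s N d alpha C : R) :
  0 <= N -> s <= N -> 1 < C -> 0 < d -> 0 <= alpha ->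
  C * d `^ alpha <= s / N -> [/\ 0 < s, d <= 1 & C * (N * d `^ alpha) <= s].
Proof.
move=> N0 sN C1 d0 a0 ratio; set P := d `^ alpha in ratio *.
have CP0 : 0 < C * P by rewrite mulr_gt0 ?powR_gt0 //; lra.
have N_gt0 : 0 < N.
  by rewrite lt_def N0 andbT; apply: contraTneq ratio => ->; rewrite invr0 mulr0 -ltNge.
have CPN : C * (N * P) <= s by rewrite mulrCA mulrC -ler_pdivlMr.
have CN : N < C * N by rewrite ltr_pMl.
split => //; first by apply: lt_le_trans CPN; rewrite !mulr_gt0 ?powR_gt0 //; lra.
rewrite leNgt; apply/negP => /ltW d1.
have P1 : 1 <= P by rewrite -(powRr0 d) /P ler_powR.
have : C * N <= C * (N * P) by rewrite ler_pM2l ?ler_peMr; lra.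
lra.
Qed.

Section holder.
Variables (R : realType) (n : nat) (alpha : R) (O : set 'rV[R]_n).
Variable phi : 'rV[R]_n -> R[i].
Hypothesis hphi : in_holder alpha O phi.
Local Notation N := (holder_norm alpha O phi).

Let sup_holder_sup_ge0 : 0 <= sup (holder_sup O phi).
Proof. by case: hphi => _ ub _; apply: sup_ge0 => // _ [x _ <-]; exact: cnorm_ge0. Qed.

Let sup_holder_quot_ge0 : 0 <= sup (holder_quot alpha O phi).
Proof.
case: hphi => _ _ ub; apply: sup_ge0 => // _ [x [y [_ _ _ ->]]].
by rewrite divr_ge0 ?cnorm_ge0 ?powR_ge0.
Qed.

Lemma holder_norm_ge0 : 0 <= N.
Proof. exact: addr_ge0. Qed.

Lemma cnorm_le_holder_norm x : closure O x -> cnorm (phi x) <= N.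
Proof.
case: hphi => _ ub _ Ox; rewrite /holder_norm -[cnorm _]addr0.
by apply: lerD => //; apply: (ub_le_sup ub); exists x.
Qed.

Lemma cnorm_sub_le_holder_norm x y : closure O x -> closure O y ->
  cnorm (phi x - phi y) <= N * edist x y `^ alpha.
Proof.
move=> Ox Oy; have [->|xy] := eqVneq x y.
  by rewrite subrr /cnorm /= expr0n addr0 sqrtr0 mulr_ge0 ?holder_norm_ge0 ?powR_ge0.
have d_gt0 : 0 < edist x y `^ alpha by apply/powR_gt0/edist_gt0/eqP.
rewrite -ler_pdivrMr //; apply: ler_wpDl sup_holder_sup_ge0 _.
by case: hphi => _ _ ub; apply: (ub_le_sup ub); exists x, y; split => //; apply/eqP.
Qed.

Lemma sup_boundary_le_holder_norm : sup_boundary O phi <= N.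
Proof.
rewrite /sup_boundary; set B := [set _ | _ in _].
have [->|/set0P B0] := eqVneq B set0; first by rewrite sup0 holder_norm_ge0.
by apply: ge_sup => // _ [x [Ox _] <-]; exact: cnorm_le_holder_norm.
Qed.

Lemma exists_ge_half_sup_boundary : 0 < sup_boundary O phi ->
  exists2 y, O y & sup_boundary O phi / 2 <= cnorm (phi y).
Proof.
rewrite /sup_boundary; set B := [set _ | _ in _]; set s := sup B => s0.
have B0 : B !=set0 by apply/set0P; apply: contraTneq s0 => B0; rewrite /s B0 sup0 ltxx.
have s34 : 3 * s / 4 < s by lra.
have [_ [p [Op _] <-] ps] := sup_gt B0 s34.
have s4 : 0 < s / 4 by lra.
have [hcont _ _] := hphi; have [d d0 pd] := hcont p Op (s / 4) s4.
have [y Oy py] := closure_edist Op d0; exists y => //.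
have := pd y (subset_closure Oy) py; have := cnormD (phi y) (phi p - phi y).
by rewrite addrC subrK cnorm_distC; lra.
Qed.

End holder.

Section far_field_integrand.
Variables (R : realType) (n : nat) (alpha : R) (O : set 'rV[R]_n).
Variable phi : 'rV[R]_n -> R[i].
Hypotheses (alpha01 : 0 <= alpha <= 1) (Obd : ebounded O) (hphi : in_holder alpha O phi).
Local Notation N := (holder_norm alpha O phi).

Lemma integrand_oscillation_le (k : R) (i : 'I_n) y y0 :
  0 <= k -> diam O <= 1 -> O y -> O y0 ->
  cnorm (expi (- (k * y 0 i)) * phi y - expi (- (k * y0 0 i)) * phi y0) <=
  (2 * k + 1) * (N * diam O `^ alpha).
Proof.
move=> k0 d1 Oy Oy0; set P := diam O `^ alpha; have [a0 a1] := andP alpha01.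
have dist_le : edist y y0 <= diam O := edist_le_diam Obd Oy Oy0.
have dP : diam O <= P by rewrite le_powR_le1 // d1 (le_trans (enorm_ge0 _) dist_le).
have phase : `|- (k * y 0 i) - - (k * y0 0 i)| <= k * P.
  rewrite (_ : _ - _ = k * (y0 0 i - y 0 i)); last by ring.
  rewrite normrM ger0_norm // ler_wpM2l // distrC.
  exact: le_trans (coord_le_edist _ _ _) (le_trans dist_le dP).
have amp : cnorm (phi y) <= N := cnorm_le_holder_norm hphi (subset_closure Oy).
have osc : cnorm (phi y - phi y0) <= N * P.
  have := cnorm_sub_le_holder_norm hphi (subset_closure Oy) (subset_closure Oy0).
  move/le_trans; apply.
  rewrite ler_wpM2l ?holder_norm_ge0 //.
  by apply: ge0_ler_powR; rewrite ?nnegrE ?enorm_ge0 // (le_trans (enorm_ge0 _) dist_le).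
have := ler_pM (normr_ge0 _) (cnorm_ge0 _) phase amp.
have := cnorm_expiM_sub (- (k * y 0 i)) (- (k * y0 0 i)) (phi y) (phi y0).
lra.
Qed.

End far_field_integrand.

Theorem theorem2p1 (R : realType) (n : nat) (Rm k : R) :
  (2 <= n)%N -> 0 < Rm -> 0 < k ->
  exists C : R, 0 < C /\
    forall (alpha : R) (O : set 'rV[R]_n),
      0 <= alpha <= 1 ->
      lipschitz_domain O -> diam O <= Rm -> connected (~` O) ->
      forall phi : 'rV[R]_n -> R[i],
        in_holder alpha O phi ->
        sup_boundary O phi / holder_norm alpha O phi >= C * powR (diam O) alpha ->
        radiates_nonzero k O phi.
Proof.
move=> n2 _ k0; have C1 : 1 < 6 * (k + 1) by lra.
(* (2k + 1) / (6 (k + 1)) <= 1/3, and 2 (s/3)^2 < (s/2)^2. *)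
exists (6 * (k + 1)); split; first lra.
move=> alpha O alpha01 [oO _ [y1 Oy1] Obd _] _ _ phi hphi ratio.
have n0 : (0 < n)%N by apply: leq_trans n2.
have [s_gt0 d_le1 CNP_le] := holder_ratio_bounds (holder_norm_ge0 hphi)
  (sup_boundary_le_holder_norm hphi) C1 (diam_gt0 n0 oO Oy1 Obd)
  (proj1 (andP alpha01)) ratio.
set s := sup_boundary O phi in s_gt0 CNP_le *.
have [y0 Oy0 y0_large] := exists_ge_half_sup_boundary hphi s_gt0.
pose i0 := Ordinal n0; exists (delta_mx 0 i0); split; first exact: enorm_delta_mx.
apply/eqP/mulf_neq0; first exact: Cnk_neq0.
pose z0 := expi (- (k * y0 0 i0)) * phi y0.
apply: (cint_neq0_near_cst oO Obd Oy0 (z := z0) (e := s / 3)).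
- by move=> y Oy; rewrite indicE memNset // mul0r mulr0.
- move=> y Oy; rewrite indicE mem_set // mul1r dotv_delta_mx.
  apply: le_trans (integrand_oscillation_le alpha01 Obd hphi i0 (ltW k0) d_le1 Oy Oy0) _.
  have : 0 <= holder_norm alpha O phi * diam O `^ alpha.
    by rewrite mulr_ge0 ?powR_ge0 ?holder_norm_ge0.
  nra.
- rewrite cnormM cnorm_expi mul1r.
  have : (s / 2) ^+ 2 <= cnorm (phi y0) ^+ 2.
    by rewrite lerXn2r ?nnegrE ?cnorm_ge0 // divr_ge0 // ltW.
  nra.
Qed.
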